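(* Let $E,A,B\in\mathbb{C}^{n,n}$ pairwise commute, $\tau>0$, and assume the initial value problem for the DDAE $E\dot x(t)=Ax(t)+Bx(t-\tau)+f(t)$, $t\in[0,\infty)$, $x|_{[-\tau,0]}=\varphi$, is uniquely solvable (for consistent, sufficiently smooth initial functions). Let $U\in\mathbb{C}^{n,n}$ be nonsingular with $UEU^{-1}=\mathrm{diag}(J^E,N^E_2,N^E_3,N^E_4)$, $UAU^{-1}=\mathrm{diag}(A_1,J^A,N^A_3,N^A_4)$, $UBU^{-1}=\mathrm{diag}(B_1,B_2,J^B,N^B_4)$, where $J^E,J^A,J^B$ are nonsingular and $N^E_2,N^E_3,N^E_4,N^A_3,N^A_4,N^B_4$ are nilpotent. Then the fourth diagonal blocks $N^E_4,N^A_4,N^B_4$ are absent (have size zero); consequently, in the transformed system the equation $N^E_4\dot x_4(t)=N^A_4x_4(t)+N^B_4x_4(t-\tau)+f_4(t)$ does not appear.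
   Context: Solutions are piecewise differentiable: continuous $x$ with $Ex$ piecewise continuously differentiable satisfying the equation for all $t\in[0,\infty)\setminus\bigcup_{j\in\mathbb{N}_0}\{j\tau\}$ (assumed $C^\infty$ on $[0,\infty)$ in the solvability analysis). An initial function is consistent if the IVP has at least one solution. Such a $U$ exists for any pairwise commuting triple. *)

From HB Require Import structures.
From mathcomp Require Import all_boot all_order all_algebra.
From mathcomp Require Import all_classical all_reals all_analysis.
From mathcomp Require Import complex.

Set Implicit Arguments.
Unset Strict Implicit.
Unset Printing Implicit Defensive.

Import Order.TTheory GRing.Theory Num.Theory.
Import numFieldNormedType.Exports.
Local Open Scope ring_scope.
Local Open Scope classical_set_scope.

Section DDAE.
Variable R : realType.
Local Notation C := (complex R).

Definition reC (z : C) : R := complex.Re z.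
Definition imC (z : C) : R := complex.Im z.

Definition smooth (g : R -> R) : Prop :=
  forall (k : nat) (t : R), derivable (derive1n k g) t 1.

(* g is C^infty on D: restriction to D of a C^infty function on R
   (for intervals this is equivalent to one-sided smoothness by Seeley's
   extension theorem) *)
Definition smooth_on (D : set R) (g : R -> R) : Prop :=
  exists G : R -> R, smooth G /\ forall t, D t -> G t = g t.

Variable n : nat.

Definition cvec_smooth_on (D : set R) (y : R -> 'cV[C]_n) : Prop :=
  forall i : 'I_n, smooth_on D (fun t => reC (y t i ord0)) /\
                   smooth_on D (fun t => imC (y t i ord0)).

Definition cvec_cont_on (D : set R) (y : R -> 'cV[C]_n) : Prop :=
  forall i : 'I_n, {within D, continuous (fun t => reC (y t i ord0))} /\
                   {within D, continuous (fun t => imC (y t i ord0))}.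

Definition cvec_deriv (y : R -> 'cV[C]_n) (t : R) (d : 'cV[C]_n) : Prop :=
  forall i : 'I_n, is_derive t 1 (fun s => reC (y s i ord0)) (reC (d i ord0)) /\
                   is_derive t 1 (fun s => imC (y s i ord0)) (imC (d i ord0)).

Definition pw_C1_nonneg (y : R -> 'cV[C]_n) : Prop :=
  exists s : nat -> R,
    s 0%N = 0 /\ (forall k, s k < s k.+1) /\ (forall M : R, exists k, M < s k) /\
    forall k, exists dy : R -> 'cV[C]_n,
      (forall t, s k < t < s k.+1 -> cvec_deriv y t (dy t)) /\
      exists g : R -> 'cV[C]_n, cvec_cont_on `[s k, s k.+1] g /\
        (forall t, s k < t < s k.+1 -> g t = dy t).

Definition ddae_solution (E A B : 'M[C]_n) (tau : R)
    (f phi x : R -> 'cV[C]_n) : Prop :=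
  (forall t, - tau <= t <= 0 -> x t = phi t) /\
  cvec_cont_on [set t | - tau <= t] x /\
  pw_C1_nonneg (fun t => E *m x t) /\
  (forall t, 0 <= t -> (forall j : nat, t != j%:R * tau) ->
     cvec_deriv (fun s => E *m x s) t (A *m x t + B *m x (t - tau) + f t)).

Definition consistent (E A B : 'M[C]_n) (tau : R) (f phi : R -> 'cV[C]_n) :=
  exists x, ddae_solution E A B tau f phi x.

Definition uniquely_solvable (E A B : 'M[C]_n) (tau : R) : Prop :=
  forall f phi : R -> 'cV[C]_n,
    cvec_smooth_on [set t | 0 <= t] f ->
    cvec_smooth_on `[- tau, 0] phi ->
    consistent E A B tau f phi ->
    exists x, ddae_solution E A B tau f phi x /\
      forall y, ddae_solution E A B tau f phi y ->
        forall t, - tau <= t -> y t = x t.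

End DDAE.

Definition nilpotent_mx (F : pzRingType) (m : nat) (M : 'M[F]_m) : Prop :=
  exists k : nat, M ^+ k = 0.

Definition diag4 (F : pzRingType) (n1 n2 n3 n4 : nat)
  (M1 : 'M[F]_n1) (M2 : 'M[F]_n2) (M3 : 'M[F]_n3) (M4 : 'M[F]_n4)
  : 'M[F]_(n1 + n2 + n3 + n4) :=
  block_mx (block_mx (block_mx M1 0 0 M2) 0 0 M3) 0 0 M4.

(** If [n4 > 0], the three nilpotent blocks [NE4], [NA4], [NB4] commute
    (because [E], [A], [B] do), so they have a common null vector [v]; then
    [w := U^-1 (0; v)] is annihilated by [E], [A] and [B].  For every
    continuous [g] vanishing on [(-oo, 0]], [t |-> g t w] then solves the
    homogeneous problem with zero history, and taking [g = 0] and
    [g = max(., 0)] contradicts uniqueness. *)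
From HB Require Import structures.
From mathcomp Require Import all_boot all_order all_algebra.
From mathcomp Require Import all_classical all_reals all_analysis.
From mathcomp Require Import complex.

Set Implicit Arguments.
Unset Strict Implicit.
Unset Printing Implicit Defensive.

Import Order.TTheory GRing.Theory Num.Theory.
Import numFieldNormedType.Exports.
Local Open Scope ring_scope.

Section CommonKernel.
Variables (F : fieldType) (m : nat).

Lemma nilpotent_mx_kernel (N : 'M[F]_m) (v : 'cV_m) :
  nilpotent_mx N -> v != 0 ->
  exists j, N ^+ j *m v != 0 /\ N *m (N ^+ j *m v) = 0.
Proof.
case=> k Nk; have : N ^+ k *m v = 0 by rewrite Nk mul0mx.
elim: k {Nk} => [|k IHk]; first by rewrite expr0 mul1mx => ->; rewrite eqxx.
move=> Nk1v v_neq0; have [Nkv0|Nkv_neq0] := eqVneq (N ^+ k *m v) 0.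
  exact: IHk.
by exists k; rewrite mulmxA -[N *m _]exprS.
Qed.

Lemma mulmx_comm_kernel (M N : 'M[F]_m) (v : 'cV_m) j :
  M *m N = N *m M -> M *m v = 0 -> M *m (N ^+ j *m v) = 0.
Proof.
move=> cMN Mv0; have cMNj : GRing.comm M (N ^+ j) by apply/commrX.
by rewrite mulmxA [M *m _]cMNj -mulmxA Mv0 mulmx0.
Qed.

Lemma nilpotent_mx_common_kernel (Ns : seq 'M[F]_m) :
  (0 < m)%N -> (forall N, N \in Ns -> nilpotent_mx N) ->
  {in Ns &, forall M N, M *m N = N *m M} ->
  exists2 v : 'cV_m, v != 0 & forall N, N \in Ns -> N *m v = 0.
Proof.
move=> m_gt0; elim: Ns => [_ _ | N Ns IHNs nilNs cNs].
  exists (delta_mx (Ordinal m_gt0) 0) => //.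
  apply/eqP => /matrixP/(_ (Ordinal m_gt0) 0); rewrite !mxE !eqxx.
  by move/eqP; rewrite oner_eq0.
have [||v v_neq0 Nsv] := IHNs.
- by move=> M NsM; apply: nilNs; rewrite inE NsM orbT.
- by move=> M M' NsM NsM'; apply: cNs; rewrite inE ?NsM ?NsM' orbT.
have [j [Njv_neq0 NNjv]] := nilpotent_mx_kernel (nilNs N (mem_head _ _)) v_neq0.
exists (N ^+ j *m v) => // M; rewrite inE => /predU1P[-> //| NsM].
by apply: mulmx_comm_kernel; [apply: cNs; rewrite inE ?NsM ?eqxx ?orbT | exact: Nsv].
Qed.

End CommonKernel.

Section BlockConjugation.
Variables (F : fieldType) (m1 m2 : nat) (U : 'M[F]_(m1 + m2)).
Hypothesis U_unit : U \in unitmx.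

Lemma conjumxM (X Y : 'M[F]_(m1 + m2)) :
  (U *m X *m invmx U) *m (U *m Y *m invmx U) = U *m (X *m Y) *m invmx U.
Proof. by rewrite -!conjumx // conjmxM // inE stablemx_unit. Qed.

Lemma conj_block_diag_comm (X Y : 'M[F]_(m1 + m2)) (X1 Y1 : 'M[F]_m1)
    (X2 Y2 : 'M[F]_m2) :
  U *m X *m invmx U = block_mx X1 0 0 X2 ->
  U *m Y *m invmx U = block_mx Y1 0 0 Y2 ->
  X *m Y = Y *m X -> X2 *m Y2 = Y2 *m X2.
Proof.
move=> UX UY cXY; have := conjumxM X Y; rewrite cXY -conjumxM UX UY.
by rewrite !mulmx_block => /(congr1 drsubmx); rewrite !block_mxKdr !mul0mx !add0r.
Qed.

Lemma conj_block_diag_kernel (X : 'M[F]_(m1 + m2)) (X1 : 'M[F]_m1) (X2 : 'M[F]_m2)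
    (v : 'cV_m2) :
  U *m X *m invmx U = block_mx X1 0 0 X2 -> X2 *m v = 0 ->
  X *m (invmx U *m col_mx 0 v) = 0.
Proof.
move=> UX X2v; have -> : X *m (invmx U *m col_mx 0 v) =
    invmx U *m (U *m X *m invmx U *m col_mx 0 v).
  by rewrite !mulmxA mulVmx // mul1mx.
by rewrite UX mul_block_col X2v !mulmx0 !mul0mx !addr0 col_mx0 mulmx0.
Qed.

Lemma invmx_col_mx0_eq0 (v : 'cV[F]_m2) :
  (invmx U *m col_mx 0 v == 0) = (v == 0).
Proof.
apply/eqP/eqP => [Uv0 | ->]; last by rewrite col_mx0 mulmx0.
have : col_mx 0 v = U *m (invmx U *m col_mx 0 v) by rewrite mulmxA mulmxV ?mul1mx.
by rewrite Uv0 mulmx0 -col_mx0 => /eq_col_mx[].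
Qed.

End BlockConjugation.

Section KernelSolutions.
Variable R : realType.
Local Notation C := (complex R).

Lemma reC_realM (r : R) (z : C) : reC (r%:C%C * z) = r * reC z.
Proof. by case: z => a b; rewrite /reC /= mul0r subr0. Qed.

Lemma imC_realM (r : R) (z : C) : imC (r%:C%C * z) = r * imC z.
Proof. by case: z => a b; rewrite /imC /= mul0r addr0. Qed.

Lemma smooth_cst (c : R) : smooth (cst c).
Proof.
have derive1n_cst k : exists d, derive1n k (cst c) = cst d.
  elim: k => [|k [d IHk]]; first by exists c; rewrite derive1n0.
  by exists 0; rewrite derive1nS IHk; apply/funext => s; rewrite derive1_cst.
by move=> k t; have [d ->] := derive1n_cst k; exact: derivable_cst.
Qed.

Variable n : nat.
Implicit Types (D : set R) (c : 'cV[C]_n).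

Lemma cvec_smooth_on_cst D c : cvec_smooth_on D (fun _ => c).
Proof.
move=> i; split; [exists (cst (reC (c i 0))) | exists (cst (imC (c i 0)))].
  by split=> //; exact: smooth_cst.
by split=> //; exact: smooth_cst.
Qed.

Lemma cvec_cont_on_cst D c : cvec_cont_on D (fun _ => c).
Proof. by move=> i; split; apply: continuous_subspaceT; exact: cst_continuous. Qed.

Lemma cvec_deriv_cst c t : cvec_deriv (fun _ => c) t 0.
Proof. by move=> i; rewrite /reC /imC mxE; split; exact: is_derive_cst. Qed.

Lemma pw_C1_nonneg_cst c : pw_C1_nonneg (fun _ => c).
Proof.
exists (fun k => k%:R); split=> //; split; first by move=> k; rewrite ltr_nat.
split; first by move=> M; exists (Num.truncn M).+1; exact: truncnS_gt.
move=> k; exists (fun _ => 0); split; first by move=> t _; exact: cvec_deriv_cst.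
by exists (fun _ => 0); split; first exact: cvec_cont_on_cst.
Qed.

Variables (E A B : 'M[C]_n) (tau : R) (w : 'cV[C]_n).
Hypotheses (Ew : E *m w = 0) (Aw : A *m w = 0) (Bw : B *m w = 0).

Lemma ddae_solution_kernel (g : R -> R) :
  continuous g -> (forall t, t <= 0 -> g t = 0) ->
  ddae_solution E A B tau (fun _ => 0) (fun _ => 0) (fun t => (g t)%:C%C *: w).
Proof.
move=> g_cont g_nonpos.
have Ex0 : (fun t => E *m ((g t)%:C%C *: w)) = fun _ => 0.
  by apply/funext => t; rewrite -scalemxAr Ew scaler0.
split; [|split; [|split]].
- by move=> t /andP[_ t_le0]; rewrite g_nonpos // scale0r.
- move=> i; split; apply: continuous_subspaceT => t.
  + under eq_fun => s do rewrite mxE reC_realM.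
    by apply: continuousM; [exact: g_cont | exact: cst_continuous].
  + under eq_fun => s do rewrite mxE imC_realM.
    by apply: continuousM; [exact: g_cont | exact: cst_continuous].
- by rewrite Ex0; exact: pw_C1_nonneg_cst.
- move=> t _ _; rewrite Ex0 -!scalemxAr Aw Bw !scaler0 !addr0.
  exact: cvec_deriv_cst.
Qed.

Lemma uniquely_solvable_kernel_eq0 : uniquely_solvable E A B tau -> w = 0.
Proof.
move=> uniq_sol.
have max0_cont : continuous (fun t : R => Num.max t 0).
  by move=> t; apply: continuous_max; [exact: cvg_id | exact: cvg_cst].
have sol0 := ddae_solution_kernel (@cst_continuous _ _ 0) (fun _ _ => erefl).
have solmax := ddae_solution_kernel max0_cont (fun t t_le0 => max_r t_le0).
have [x [_ x_uniq]] := uniq_sol _ _ (cvec_smooth_on_cst _ 0)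
  (cvec_smooth_on_cst _ 0) (ex_intro _ _ sol0).
pose t := Num.max 1 (- tau).
have t_gt0 : 0 < t by rewrite lt_max ltr01.
have tau_le_t : - tau <= t by rewrite le_max lexx orbT.
have := x_uniq _ solmax t tau_le_t; rewrite -(x_uniq _ sol0 t tau_le_t).
rewrite /= (max_l (ltW t_gt0)) scale0r => /eqP.
by rewrite scaler_eq0 fmorph_eq0 (gt_eqF t_gt0) => /eqP.
Qed.

End KernelSolutions.

Theorem corollary4 (R : realType) (n : nat) (E A B : 'M[complex R]_n) (tau : R) :
  E *m A = A *m E -> E *m B = B *m E -> A *m B = B *m A ->
  0 < tau ->
  uniquely_solvable E A B tau ->
  forall (n1 n2 n3 n4 : nat) (hn : (n1 + n2 + n3 + n4)%N = n) (U : 'M[complex R]_n)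
    (JE : 'M[complex R]_n1) (NE2 : 'M[complex R]_n2)
    (NE3 : 'M[complex R]_n3) (NE4 : 'M[complex R]_n4)
    (A1 : 'M[complex R]_n1) (JA : 'M[complex R]_n2)
    (NA3 : 'M[complex R]_n3) (NA4 : 'M[complex R]_n4)
    (B1 : 'M[complex R]_n1) (B2 : 'M[complex R]_n2)
    (JB : 'M[complex R]_n3) (NB4 : 'M[complex R]_n4),
  U \in unitmx ->
  U *m E *m invmx U = castmx (hn, hn) (diag4 JE NE2 NE3 NE4) ->
  U *m A *m invmx U = castmx (hn, hn) (diag4 A1 JA NA3 NA4) ->
  U *m B *m invmx U = castmx (hn, hn) (diag4 B1 B2 JB NB4) ->
  JE \in unitmx -> JA \in unitmx -> JB \in unitmx ->
  nilpotent_mx NE2 -> nilpotent_mx NE3 -> nilpotent_mx NE4 ->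
  nilpotent_mx NA3 -> nilpotent_mx NA4 -> nilpotent_mx NB4 ->
  n4 = 0%N.
Proof.
move=> cEA cEB cAB _ uniq_sol n1 n2 n3 n4 hn U JE NE2 NE3 NE4 A1 JA NA3 NA4
  B1 B2 JB NB4 U_unit UE UA UB _ _ _ _ _ nilE4 _ nilA4 nilB4.
subst n; rewrite !castmx_id in UE UA UB.
apply/eqP; rewrite -leqn0 leqNgt; apply/negP => n4_gt0.
have [v v_neq0 v_ker] : exists2 v : 'cV_n4, v != 0 &
    forall N, N \in [:: NE4; NA4; NB4] -> N *m v = 0.
  have cEA4 := conj_block_diag_comm U_unit UE UA cEA.
  have cEB4 := conj_block_diag_comm U_unit UE UB cEB.
  have cAB4 := conj_block_diag_comm U_unit UA UB cAB.
  apply: nilpotent_mx_common_kernel => // [N | M N].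
    by rewrite !inE => /or3P[] /eqP->.
  by rewrite !inE => /or3P[] /eqP-> /or3P[] /eqP-> //; exact/esym.
have ker := conj_block_diag_kernel U_unit.
move: v_neq0; rewrite -(invmx_col_mx0_eq0 U_unit v) => /eqP; apply.
apply: (uniquely_solvable_kernel_eq0 _ _ _ uniq_sol).
- by apply: ker UE _; apply: v_ker; rewrite !inE eqxx.
- by apply: ker UA _; apply: v_ker; rewrite !inE eqxx ?orbT.
- by apply: ker UB _; apply: v_ker; rewrite !inE eqxx ?orbT.
Qed.
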